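(* Let $n,g$ be integers with $0\leq g\leq \lfloor \frac{n-3}{2}\rfloor$, and let $T$ be a tree of order $n$. Then $T$ has an $R_g$-cutset with $\kappa_g(T)=n-2g-2$ if and only if $T$ is of type $T_n^*$ (with respect to $g$).
   Context: All graphs are finite and simple. A tree $T$ of order $n$ is of type $T_n^*$ (with respect to $g$) if it contains a vertex $v$ such that $T-v$ has two connected components with exactly $g+1$ vertices each, and every other connected component of $T-v$ (there may be none) has at most $g$ vertices. Equivalently, $T$ is obtained from two trees $T',T''$ of order $g+1$ and trees $T_1,\ldots,T_r$ ($r\ge 0$) each of order at most $g$ with $\sum_i|V(T_i)|=n-2g-3$, by adding a new vertex $v$ and one edge from $v$ to each of $T',T'',T_1,\ldots,T_r$. A set $S\subseteq V(G)$ is a cutset if $G-S$ is disconnected. For a non-negative integer $g$, a cutset $S$ is an $R_g$-cutset if every connected component of $G-S$ has at least $g+1$ vertices. If $G$ has at least one $R_g$-cutset, the $g$-extra connectivity $\kappa_g(G)$ is the minimum cardinality of an $R_g$-cutset of $G$. *)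

(* A simple graph is a symmetric irreflexive relation e on a finType T. *)
From mathcomp Require Import all_boot.
Set Implicit Arguments. Unset Strict Implicit. Unset Printing Implicit Defensive.

Section Graphs.
Variables (T : finType) (e : rel T).

Definition del_rel (S : {set T}) : rel T :=
  [rel x y | [&& e x y, x \notin S & y \notin S]].

Definition comp_of (S : {set T}) (x : T) : {set T} :=
  [set y | (y \notin S) && connect (del_rel S) x y].

Definition components (S : {set T}) : {set {set T}} :=
  [set comp_of S x | x in ~: S].

Definition connected_graph : Prop := forall x y : T, connect e x y.

Definition has_cycle : Prop :=
  exists (x : T) (p : seq T),
    [/\ path e x p, uniq (x :: p), 2 <= size p & e (last x p) x].

Definition is_tree : Prop := connected_graph /\ ~ has_cycle.

Definition cutset (S : {set T}) : Prop := 1 < #|components S|.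

Definition Rg_cutset (g : nat) (S : {set T}) : Prop :=
  cutset S /\ forall C, C \in components S -> g + 1 <= #|C|.

(* kappa_g(G) = k : k is the minimum cardinality of an R_g-cutset
   (in particular an R_g-cutset exists). *)
Definition kappa_g_eq (g k : nat) : Prop :=
  (exists S, Rg_cutset g S /\ #|S| = k) /\
  (forall S, Rg_cutset g S -> k <= #|S|).

Definition type_Tstar (g : nat) : Prop :=
  exists v : T, exists C1 C2 : {set T},
    [/\ [/\ C1 \in components [set v], C2 \in components [set v] & C1 != C2],
        #|C1| = g + 1, #|C2| = g + 1 &
        forall C, C \in components [set v] -> C != C1 -> C != C2 -> #|C| <= g].

End Graphs.

From mathcomp Require Import all_boot.
From mathcomp Require Import zify.
Set Implicit Arguments. Unset Strict Implicit. Unset Printing Implicit Defensive.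

(* Both directions
   rest on one observation: if U is a union of components of G - v, at least
   two of them and each of size >= g + 1, then ~: U is an R_g-cutset whose
   components are exactly those of U, so |U| = n - |~: U| <= 2g + 2 as soon as
   kappa_g >= n - 2g - 2.
   (=>) Take an R_g-cutset S and two components of G - S.  A path joining them
        leaves the first one through an edge u v with v in S, continuing to w.
        In a tree u and w lie in different components of G - v, which contain
        the two components of G - S, hence have size >= g + 1; the observation
        applied to two resp. three big components of G - v yields type T_n^*.
   (<=) Removing everything but the two big components A, B of T - v gives an
        R_g-cutset of size n - 2g - 2.  Conversely every R_g-cutset S contains
        v (otherwise a component of T - S avoiding v would be a whole big
        component of T - v, which however is adjacent to v), and then every
        vertex outside S lies in A or B, so |S| >= n - 2g - 2.
   The file develops components of G - R in general, then the two tree facts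
   (separation of neighbours, exit edge), then the two directions. *)

Lemma connect_uniq_path (T : finType) (r : rel T) x y : connect r x y ->
  exists p, [/\ path r x p, uniq (x :: p) & last x p = y].
Proof. by case/connectP=> p pp ->; case: (shortenP pp) => q pq uq _; exists q. Qed.

Section Components.
Variables (T : finType) (e : rel T).
Hypothesis esym : symmetric e.
Implicit Types (R S U : {set T}) (x y : T).

Local Notation comp := (comp_of e).

Lemma del_connect_sym R : connect_sym (del_rel e R).
Proof.
apply: sym_connect_sym => x y; rewrite /del_rel /= esym.
by case: (x \in R); case: (y \in R); rewrite /= ?andbF.
Qed.

Lemma mem_comp R x y : (y \in comp R x) = (y \notin R) && connect (del_rel e R) x y.
Proof. by rewrite inE. Qed.

Lemma comp_self R x : x \notin R -> x \in comp R x.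
Proof. by rewrite mem_comp => ->; rewrite connect0. Qed.

Lemma comp_subC R x : comp R x \subset ~: R.
Proof. by apply/subsetP=> y; rewrite mem_comp inE => /andP[]. Qed.

Lemma comp_eq R x y : y \in comp R x -> comp R y = comp R x.
Proof.
rewrite mem_comp => /andP[_ cxy]; apply/setP=> z.
by rewrite !mem_comp (same_connect (del_connect_sym R) cxy).
Qed.

Lemma comp_components R x : x \notin R -> comp R x \in components e R.
Proof. by move=> xR; apply: imset_f; rewrite inE. Qed.

Lemma path_del R x p : x \notin R ->
  path (del_rel e R) x p = path e x p && all (fun y => y \notin R) p.
Proof.
elim: p x => //= y p IH x xR; rewrite /del_rel /= xR.
case yR: (y \in R); first by rewrite !andbF.
by rewrite IH ?yR //= andbT andbA.
Qed.

Lemma all_notin1 (v : T) (p : seq T) : v \notin p -> all (fun z => z \notin [set v]) p.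
Proof. by move=> vp; apply/allP=> z zp; rewrite inE; apply: contraNneq vp => <-. Qed.

Lemma comp_mono R S x : R \subset S -> comp S x \subset comp R x.
Proof.
move=> RS; apply/subsetP=> y; rewrite !mem_comp => /andP[yS c].
rewrite (contra (subsetP RS y)) //=; apply: connect_sub c => a b /and3P[eab aS bS].
by apply: connect1; rewrite /del_rel /= eab !(contra (subsetP RS _)).
Qed.

Lemma comp_root R x y : y \in comp R x -> x \notin R.
Proof.
rewrite mem_comp => /andP[yR /connectP[[|z p] /= pp yE]]; first by rewrite -yE.
by case/andP: pp => /and3P[].
Qed.

Lemma comp_sub_avoid R S x : comp R x \subset ~: S -> comp R x \subset comp S x.
Proof.
move=> CS; apply/subsetP=> y yC; rewrite mem_comp -in_setC (subsetP CS) //=.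
have xR := comp_root yC; move: yC; rewrite mem_comp => /andP[_ /connectP[p pp ->]].
have /andP[pe pR] : path e x p && all (fun z => z \notin R) p by rewrite -path_del.
have notS z : z \in x :: p -> z \notin S.
  move=> zp; rewrite -in_setC (subsetP CS) // mem_comp (path_connect pp zp) andbT.
  by case/predU1P: zp => [->|/(allP pR)].
apply/connectP; exists p => //; rewrite path_del ?notS ?mem_head //= pe /=.
by apply/allP=> z zp; rewrite notS // inE zp orbT.
Qed.

(* U is a union of components of G - R. *)
Definition comp_closed R U := forall x, x \in U -> comp R x \subset U.

Lemma comp_closed_comp R x : comp_closed R (comp R x).
Proof. by move=> y /comp_eq ->. Qed.

Lemma comp_closedU R U V : comp_closed R U -> comp_closed R V -> comp_closed R (U :|: V).
Proof.
move=> cU cV x; rewrite in_setU => /orP[/cU|/cV] sub; apply: subset_trans sub _;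
  by rewrite ?subsetUl ?subsetUr.
Qed.

Lemma card_closedU R U x : comp_closed R U -> x \notin R -> x \notin U ->
  #|U :|: comp R x| = #|U| + #|comp R x|.
Proof.
move=> cU xR xU; rewrite cardsU; suff -> : U :&: comp R x = set0 by rewrite cards0 subn0.
apply/setP=> z; rewrite !inE -mem_comp; apply/negP=> /andP[zU zx].
by move: xU; rewrite (subsetP (cU _ zU)) // (comp_eq zx) comp_self.
Qed.

Lemma components_closed R U : U \subset ~: R -> comp_closed R U ->
  components e (~: U) = [set comp R x | x in U].
Proof.
move=> UR cU; rewrite /components setCK; apply: eq_in_imset => x xU /=.
have RU : R \subset ~: U by rewrite subsetC.
by apply/eqP; rewrite eqEsubset comp_mono //= comp_sub_avoid // setCK cU.
Qed.

Lemma Rg_cutset_closed g R U x y : U \subset ~: R -> comp_closed R U ->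
  x \in U -> y \in U -> comp R x != comp R y ->
  (forall z, z \in U -> g + 1 <= #|comp R z|) -> Rg_cutset e g (~: U).
Proof.
move=> UR cU xU yU neq big; rewrite /Rg_cutset /cutset (components_closed UR cU).
split; last by move=> C /imsetP[z zU ->]; exact: big.
by apply/card_gt1P; exists (comp R x), (comp R y); split => //; apply: imset_f.
Qed.

End Components.

Section ConnectedAcyclic.
Variables (T : finType) (e : rel T).
Hypotheses (esym : symmetric e) (eirr : irreflexive e).
Hypotheses (conn : connected_graph e) (acyc : ~ has_cycle e).
Implicit Types (S : {set T}) (a b v w x : T).
Local Notation comp := (comp_of e).

Lemma neighbour_in_comp v x : x != v -> exists2 y, e v y & y \in comp [set v] x.
Proof.
move=> xv; case: (connect_uniq_path (conn v x)) => -[|y p] [/= pp up lp].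
  by rewrite lp eqxx in xv.
case/andP: pp => evy pp; case/andP: up; rewrite inE negb_or => /andP[vy vp] _.
have yv : y \notin [set v] by rewrite inE eq_sym.
have xC : x \in comp [set v] y.
  rewrite mem_comp inE xv; apply/connectP; exists p => //.
  by rewrite path_del // pp all_notin1.
by exists y => //; rewrite (comp_eq esym xC) comp_self.
Qed.

Lemma neighbours_separated v a w : e v a -> e v w -> a != w ->
  comp [set v] a != comp [set v] w.
Proof.
move=> eva evw aw.
have nbr z : e v z -> z \notin [set v] by rewrite inE; apply: contraTneq => ->; rewrite eirr.
have [av wv] := (nbr a eva, nbr w evw).
apply/negP=> /eqP E; have : w \in comp [set v] a by rewrite E comp_self.
rewrite mem_comp => /andP[_ /connect_uniq_path[p [pp up lp]]].
move: pp; rewrite path_del // => /andP[pe pv].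
apply: acyc; exists v, (a :: p); split.
- by rewrite /= eva pe.
- rewrite cons_uniq up andbT inE negb_or eq_sym -in_set1 av /=.
  by apply/negP=> /(allP pv); rewrite inE eqxx.
- by case: p {pe pv up} lp => [/= aw'|//]; rewrite aw' eqxx in aw.
- by rewrite /= lp esym.
Qed.

Lemma exit_edge S a b : b \notin S -> b \notin comp S a ->
  forall p x, path e x p -> uniq (x :: p) -> x \in comp S a -> last x p = b ->
  exists u v w, [/\ u \in comp S a, v \in S, e u v & e v w] /\
                (u != w /\ b \in comp [set v] w).
Proof.
move=> bS nb; elim=> [|y p IH] x /=; first by move=> _ _ xC xb; rewrite -xb xC in nb.
move=> /andP[exy pp] /andP[xyp uyp] xC lb.
case yS: (y \in S); last first.
  apply: (IH y) => //; rewrite mem_comp yS /=; move: xC; rewrite mem_comp => /andP[xS cax].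
  by apply: connect_trans cax (connect1 _); rewrite /del_rel /= exy xS yS.
case: p pp uyp lb {IH} xyp => [_ _ yb|w p]; first by rewrite -yb yS in bS.
move=> /= /andP[eyw pp] /andP[ywp _] lb xyp.
exists x, y, w; split => //; split.
  by apply: contraNneq xyp => ->; rewrite !inE eqxx orbT.
move: ywp; rewrite inE negb_or => /andP[yw yp].
rewrite mem_comp inE; apply/andP; split; first by apply: contraNneq bS => ->.
apply/connectP; exists p => //.
by rewrite path_del ?inE 1?eq_sym // pp all_notin1.
Qed.

Lemma Rg_cutset_big_split g S : Rg_cutset e g S ->
  exists v u w, [/\ u != v, w != v, comp [set v] u != comp [set v] w,
                   g + 1 <= #|comp [set v] u| & g + 1 <= #|comp [set v] w|].
Proof.
case=> /card_gt1P[_ [_ [/imsetP[a aS ->] /imsetP[b bS ->] nD]]] big.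
rewrite !inE in aS bS.
have nb : b \notin comp S a by apply: contra nD => /(comp_eq esym) ->.
have [p [pp up lp]] := connect_uniq_path (conn a b).
have [u [v [w [[uC vS euv evw] [uw bC]]]]] :=
  exit_edge bS nb pp up (comp_self e aS) lp.
exists v, u, w; split.
- by apply: contraTneq uC => ->; rewrite mem_comp vS.
- by apply: contraTneq evw => ->; rewrite eirr.
- by apply: neighbours_separated; rewrite // esym.
- apply: leq_trans (big _ (comp_components e aS)) (subset_leq_card _).
  by rewrite -(comp_eq esym uC) comp_mono // sub1set.
- apply: leq_trans (big _ (comp_components e bS)) (subset_leq_card _).
  by rewrite -(comp_eq esym bC) comp_mono // sub1set.
Qed.

End ConnectedAcyclic.

Section Balanced.
Variables (T : finType) (e : rel T) (g : nat) (v : T).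
Hypothesis esym : symmetric e.
Hypothesis kappa_lb : forall S, Rg_cutset e g S -> #|T| - 2 * g - 2 <= #|S|.
Implicit Types (U : {set T}) (x y z : T).
Local Notation comp := (comp_of e [set v]).

Lemma big_union_card U x y : U \subset ~: [set v] -> comp_closed e [set v] U ->
  x \in U -> y \in U -> comp x != comp y ->
  (forall z, z \in U -> g + 1 <= #|comp z|) -> #|U| <= 2 * g + 2.
Proof.
move=> Uv cU xU yU nxy big.
have cut := Rg_cutset_closed Uv cU xU yU nxy big.
have xv : x \notin [set v] by rewrite -in_setC (subsetP Uv).
have yv : y \notin [set v] by rewrite -in_setC (subsetP Uv).
have yx : y \notin comp x by apply: contra nxy => /(comp_eq esym) ->.
have := card_closedU esym (comp_closed_comp esym (R := [set v]) (x := x)) yv yx.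
have : comp x :|: comp y \subset U by rewrite subUset !cU.
move=> /subset_leq_card; have := big x xU; have := big y yU.
have := kappa_lb cut; have := cardsC U; have := max_card U; lia.
Qed.

Lemma balanced_split u w : u != v -> w != v -> comp u != comp w ->
  g + 1 <= #|comp u| -> g + 1 <= #|comp w| -> type_Tstar e g.
Proof.
move=> uv wv nuw bu bw.
have uR : u \notin [set v] by rewrite inE.
have wR : w \notin [set v] by rewrite inE.
set AB := comp u :|: comp w.
have cAB : comp_closed e [set v] AB by apply: comp_closedU; apply: comp_closed_comp.
have ABv : AB \subset ~: [set v] by rewrite subUset !comp_subC.
have inAB z : z \in AB -> comp z = comp u \/ comp z = comp w.
  by rewrite in_setU => /orP[] /(comp_eq esym) ->; [left|right].
have uAB : u \in AB by rewrite in_setU comp_self.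
have wAB : w \in AB by rewrite in_setU comp_self ?orbT.
have bigAB z : z \in AB -> g + 1 <= #|comp z| by case/inAB => ->.
have wu : w \notin comp u by apply: contra nuw => /(comp_eq esym) ->.
have sizeAB : #|AB| = #|comp u| + #|comp w|.
  by apply: card_closedU => //; exact: comp_closed_comp.
have cardAB := big_union_card ABv cAB uAB wAB nuw bigAB.
have [su sw] : #|comp u| = g + 1 /\ #|comp w| = g + 1 by lia.
exists v, (comp u), (comp w); split => //; first by split; rewrite ?comp_components.
move=> _ /imsetP[z zR ->] zu zw; rewrite inE in zR; rewrite leqNgt; apply/negP => bz.
have zAB : z \notin AB.
  apply/negP => /inAB[] E; [move: zu|move: zw]; by rewrite E eqxx.
have cABz : comp_closed e [set v] (AB :|: comp z).
  by apply: comp_closedU => //; apply: comp_closed_comp.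
have ABzv : AB :|: comp z \subset ~: [set v] by rewrite subUset ABv comp_subC.
have bigABz y : y \in AB :|: comp z -> g + 1 <= #|comp y|.
  by rewrite in_setU => /orP[/bigAB //|/(comp_eq esym) ->]; rewrite addn1.
have := big_union_card ABzv cABz (subsetP (subsetUl _ _) _ uAB)
  (subsetP (subsetUl _ _) _ wAB) nuw bigABz.
(* A third big component would push the union beyond 2g + 2. *)
rewrite (card_closedU esym cAB zR zAB) sizeAB su sw; clear -bz; lia.
Qed.

End Balanced.

Section TstarMinimum.
Variables (T : finType) (e : rel T) (g : nat) (v x1 x2 : T).
Hypotheses (esym : symmetric e) (conn : connected_graph e).
Implicit Types (S : {set T}) (x y : T).
Local Notation comp := (comp_of e [set v]).

Hypotheses (x1v : x1 != v) (x2v : x2 != v) (n12 : comp x1 != comp x2).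
Hypotheses (size1 : #|comp x1| = g + 1) (size2 : #|comp x2| = g + 1).
Hypothesis small : forall C, C \in components e [set v] ->
  C != comp x1 -> C != comp x2 -> #|C| <= g.

Lemma big_comp x : x != v -> g + 1 <= #|comp x| -> comp x = comp x1 \/ comp x = comp x2.
Proof.
move=> xv big; case: (eqVneq (comp x) (comp x1)) => [|n1]; first by left.
case: (eqVneq (comp x) (comp x2)) => [|n2]; first by right.
have xR : x \notin [set v] by rewrite inE.
by have := small (comp_components e xR) n1 n2; rewrite leqNgt -addn1 big.
Qed.

Lemma center_in_Rg_cutset S : Rg_cutset e g S -> v \in S.
Proof.
case=> /card_gt1P[_ [_ [/imsetP[y1 y1S ->] /imsetP[y2 y2S ->] nD]]] big.
apply/negPn/negP => vS.
have [x xS vD] : exists2 x, x \notin S & v \notin comp_of e S x.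
  rewrite !inE in y1S y2S.
  case: (boolP (v \in comp_of e S y1)) => [/(comp_eq esym) E1|]; last by exists y1.
  case: (boolP (v \in comp_of e S y2)) => [/(comp_eq esym) E2|]; last by exists y2.
  by rewrite -E1 -E2 eqxx in nD.
have xv : x != v by apply: contraNneq vD => <-; rewrite comp_self.
have bigD : g + 1 <= #|comp_of e S x| by apply: big; exact: comp_components.
have DC : comp_of e S x \subset comp x.
  by rewrite comp_sub_avoid // subsetC sub1set inE.
have sizeC : #|comp x| = g + 1.
  by case: (big_comp xv (leq_trans bigD (subset_leq_card DC))) => ->.
have DeqC : comp_of e S x = comp x by apply/eqP; rewrite eqEcard DC sizeC bigD.
have [y evy] := neighbour_in_comp esym conn xv; rewrite -DeqC mem_comp => /andP[yS cxy].
apply: (negP vD); rewrite mem_comp vS /=; apply: connect_trans cxy (connect1 _).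
by rewrite /del_rel /= esym evy yS vS.
Qed.

Lemma card_big_pair : #|comp x1 :|: comp x2| = 2 * g + 2.
Proof.
have x2R : x2 \notin [set v] by rewrite inE.
have x2C : x2 \notin comp x1 by apply: contra n12 => /(comp_eq esym) ->.
rewrite card_closedU //; last exact: comp_closed_comp.
by rewrite size1 size2 addnACA addnn -mul2n.
Qed.

Lemma big_pair_Rg_cutset : Rg_cutset e g (~: (comp x1 :|: comp x2)).
Proof.
have x1R : x1 \notin [set v] by rewrite inE.
have x2R : x2 \notin [set v] by rewrite inE.
apply: (Rg_cutset_closed (R := [set v]) (x := x1) (y := x2)) => //.
- by rewrite subUset !comp_subC.
- by apply: comp_closedU; apply: comp_closed_comp.
- by rewrite in_setU comp_self.
- by rewrite in_setU comp_self ?orbT.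
- by move=> z; rewrite in_setU => /orP[] /(comp_eq esym) ->; rewrite ?size1 ?size2.
Qed.

Lemma Rg_cutset_card_lb S : Rg_cutset e g S -> #|T| - 2 * g - 2 <= #|S|.
Proof.
move=> cut; have vS := center_in_Rg_cutset cut; case: cut => _ big.
have sub : ~: S \subset comp x1 :|: comp x2.
  apply/subsetP => x; rewrite inE => xS.
  have xv : x != v by apply: contraNneq xS => ->.
  have DC : comp_of e S x \subset comp x by rewrite comp_mono // sub1set.
  have bigD := big _ (comp_components e xS).
  rewrite in_setU; case: (big_comp xv (leq_trans bigD (subset_leq_card DC))) => <-;
    by rewrite comp_self ?orbT ?inE.
by have := subset_leq_card sub; rewrite card_big_pair; have := cardsC S; lia.
Qed.

End TstarMinimum.

Theorem theorem4p3 (T : finType) (e : rel T) (n g : nat) :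
  symmetric e -> irreflexive e -> is_tree e -> #|T| = n -> 2 * g + 3 <= n ->
  ((exists S : {set T}, Rg_cutset e g S) /\ kappa_g_eq e g (n - 2 * g - 2))
  <-> type_Tstar e g.
Proof.
move=> esym eirr [conn acyc] <- _; split.
  case=> _ [[S [cut _]] kappa_lb].
  have [v [u [w [uv wv nuw bu bw]]]] := Rg_cutset_big_split esym eirr conn acyc cut.
  exact: (balanced_split esym kappa_lb uv wv nuw bu bw).
case=> v [_ [_ [[/imsetP[x1 x1R ->] /imsetP[x2 x2R ->] n12] size1 size2 small]]].
rewrite !inE in x1R x2R.
have cut := big_pair_Rg_cutset esym x1R x2R n12 size1 size2.
split; first by exists (~: (comp_of e [set v] x1 :|: comp_of e [set v] x2)).
split; last exact: Rg_cutset_card_lb esym conn x1R x2R n12 size1 size2 small.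
exists (~: (comp_of e [set v] x1 :|: comp_of e [set v] x2)); split => //.
have := cardsC (comp_of e [set v] x1 :|: comp_of e [set v] x2).
by rewrite (card_big_pair esym x2R n12 size1 size2); lia.
Qed.
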